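(* Let $n\le N$, let $\Xi$ be the set of designs $\{(\boldsymbol{x}_i,w_i):i=1,\ldots,N\}$ with $0\le w_i\le1/n$ and $\sum_iw_i=1$, let $\Phi\in\Lambda$, and let $\xi^*\in\Xi$ satisfy $\Phi(\xi^* )=\min_{\xi\in\Xi}\Phi(\xi)$. Let $\epsilon>0$ and let $\xi_\epsilon=\{(\boldsymbol{x}_i,w_i)\}\in\Xi$ with $\Phi(\xi_\epsilon)<\infty$. Suppose there is a partition $\mathcal{X}=\mathcal{X}_1\cup\mathcal{X}_2\cup\mathcal{X}_3$ of $\{\boldsymbol{x}_1,\ldots,\boldsymbol{x}_N\}$ such that (a) $w_i=0$ for $\boldsymbol{x}_i\in\mathcal{X}_1$ and $w_i=1/n$ for $\boldsymbol{x}_i\in\mathcal{X}_3$; (b) if $\mathcal{X}_2=\emptyset$, then $\max_{\boldsymbol{x}_i\in\mathcal{X}_3}F_\Phi(\xi_\epsilon;\boldsymbol{x}_i)\le\min_{\boldsymbol{x}_i\in\mathcal{X}_1}F_\Phi(\xi_\epsilon;\boldsymbol{x}_i)+\epsilon$; (c) if $\mathcal{X}_2\ne\emptyset$, then there is a number $s$ such that for every $\boldsymbol{x}_i\in\mathcal{X}_2$: (i) $0<w_i<1/n$; (ii) $s-\epsilon/2<F_\Phi(\xi_\epsilon;\boldsymbol{x}_i)<s+\epsilon/2$; and (iii) $\max_{\boldsymbol{x}_j\in\mathcal{X}_3}F_\Phi(\xi_\epsilon;\boldsymbol{x}_j)\le s+\epsilon/2$ and $s-\epsilon/2\le\min_{\boldsymbol{x}_j\in\mathcal{X}_1}F_\Phi(\xi_\epsilon;\boldsymbol{x}_j)$.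 Then $\xi_\epsilon$ is an $\epsilon$-approximation of a $\Phi$-optimal design, i.e. $\Phi(\xi_\epsilon)-\Phi(\xi^* )\le\epsilon$. (Maximum over the empty set is $-\infty$, minimum over the empty set is $+\infty$.)
   Context: Designs $\xi=\{(\boldsymbol{x}_i,w_i)\}$ on $\mathcal{X}=\{\boldsymbol{x}_1,\ldots,\boldsymbol{x}_N\}$ with $w_i\ge0$, $\sum w_i=1$; $M(\xi)=\sum_iw_iI_{\boldsymbol\theta}(\boldsymbol{x}_i)$ with symmetric PSD $I_{\boldsymbol\theta}(\boldsymbol{x}_i)$; $\Phi(\xi)$ is a criterion of $M(\xi)$ ($+\infty$ when undefined). $F_\Phi(\xi,\eta)=\lim_{\alpha\downarrow0}[\Phi((1-\alpha)\xi+\alpha\eta)-\Phi(\xi)]/\alpha$; $F_\Phi(\xi;\boldsymbol{x}_i)=F_\Phi(\xi,\delta_{\boldsymbol{x}_i})$ with $\delta_{\boldsymbol{x}_i}$ the one-point design at $\boldsymbol{x}_i$. $\Lambda$: criteria convex in the weights, linearly differentiable ($F_\Phi(\xi,\eta)=\sum_i\lambda_iF_\Phi(\xi;\boldsymbol{x}_i)$ for $\eta=\{(\boldsymbol{x}_i,\lambda_i)\}$ whenever $\Phi(\xi)<\infty$), and infinitely differentiable along line segments of designs. A design $\xi$ is an $\epsilon$-approximation of an optimal design $\xi^*$ if $\Phi(\xi)-\Phi(\xi^* )\le\epsilon$. *)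

From HB Require Import structures.
From mathcomp Require Import all_boot all_order all_algebra.
From mathcomp Require Import all_classical all_reals all_analysis.
Set Implicit Arguments. Unset Strict Implicit. Unset Printing Implicit Defensive.
Import Order.TTheory GRing.Theory Num.Theory.
Import numFieldNormedType.Exports.
Local Open Scope ring_scope.
Local Open Scope classical_set_scope.

Section Defs.
Variables (R : realType) (N : nat).

(* A design on X = {x_1,...,x_N} is identified with its weight vector. *)
Definition design (w : 'I_N -> R) : Prop :=
  (forall i, 0 <= w i) /\ \sum_(i < N) w i = 1.

Definition Xi_design (n : nat) (w : 'I_N -> R) : Prop :=
  (forall i, 0 <= w i <= n%:R^-1) /\ \sum_(i < N) w i = 1.

Definition delta (i : 'I_N) : 'I_N -> R := fun j => if j == i then 1 else 0.

Definition seg (xi eta : 'I_N -> R) (a : R) : 'I_N -> R :=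
  fun j => (1 - a) * xi j + a * eta j.

Definition info_mx (p : nat) (I : 'I_N -> 'M[R]_p) (w : 'I_N -> R) : 'M[R]_p :=
  \sum_(i < N) w i *: I i.

Definition symPSD (p : nat) (A : 'M[R]_p) : Prop :=
  A^T = A /\ forall v : 'rV[R]_p, 0 <= (v *m A *m v^T) 0 0.

Definition convex_in_weights (Phi : ('I_N -> R) -> \bar R) : Prop :=
  forall xi eta a, design xi -> design eta -> 0 <= a <= 1 ->
    (Phi (seg xi eta a) <= (1 - a)%:E * Phi xi + a%:E * Phi eta)%E.

Definition is_dir_deriv (Phi : ('I_N -> R) -> \bar R)
    (F : ('I_N -> R) -> ('I_N -> R) -> R) : Prop :=
  forall xi eta, design xi -> design eta -> (Phi xi < +oo)%E ->
    (fun a : R => ((Phi (seg xi eta a) - Phi xi) * (a^-1)%:E)%E) @ 0^'+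
      --> (F xi eta)%:E.

Definition lin_diff (Phi : ('I_N -> R) -> \bar R)
    (F : ('I_N -> R) -> ('I_N -> R) -> R) : Prop :=
  forall xi eta, design xi -> design eta -> (Phi xi < +oo)%E ->
    F xi eta = \sum_(i < N) eta i * F xi (delta i).

Definition smooth_on_segments (Phi : ('I_N -> R) -> \bar R) : Prop :=
  forall xi eta a, design xi -> design eta -> 0 < a < 1 ->
    (Phi (seg xi eta a) < +oo)%E ->
    forall k : nat,
      derivable (derive1n k (fun b : R => fine (Phi (seg xi eta b)))) a 1.

Definition in_Lambda (Phi : ('I_N -> R) -> \bar R)
    (F : ('I_N -> R) -> ('I_N -> R) -> R) : Prop :=
  (forall w, (-oo < Phi w)%E) /\
  convex_in_weights Phi /\ is_dir_deriv Phi F /\ lin_diff Phi F /\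
  smooth_on_segments Phi.

End Defs.
Arguments delta {R N} i _.

From HB Require Import structures.
From mathcomp Require Import all_boot all_order all_algebra.
From mathcomp Require Import ring lra.
From mathcomp Require Import all_classical all_reals all_analysis.
Import Order.TTheory GRing.Theory Num.Theory.
Import numFieldNormedType.Exports.
Local Open Scope ring_scope.

(* By convexity, Phi(xi_star) - Phi(w) dominates the directional derivative
   F(w, xi_star), which linear differentiability writes as
   sum_i (xi_star_i - w_i) F(w; x_i).  The partition conditions supply a
   threshold c such that weight is only removed at points with
   F(w; x_i) <= c and only added at points with F(w; x_i) >= c - eps; as the
   weight differences sum to 0 and the added weight is at most 1, the sum is
   at least -eps. *)

Section ThresholdSum.
Set Implicit Arguments.
Unset Strict Implicit.
Variables (R : realType) (T : finType).

Definition threshold_split (xs w f : T -> R) (c eps : R) : Prop :=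
  forall i, (xs i <= w i /\ f i <= c) \/ (w i <= xs i /\ c - eps <= f i).

Lemma threshold_split_sum_ge (xs w f : T -> R) (c eps : R) :
  0 <= eps -> (forall i, 0 <= xs i) -> (forall i, 0 <= w i) ->
  \sum_i xs i = 1 -> \sum_i w i = 1 -> threshold_split xs w f c eps ->
  - eps <= \sum_i (xs i - w i) * f i.
Proof.
move=> eps_ge0 xs_ge0 w_ge0 sum_xs sum_w split_c.
have -> : \sum_i (xs i - w i) * f i =
    \sum_i ((xs i - w i) * (f i - c) + c * (xs i - w i)).
  by apply: eq_bigr => i _; ring.
rewrite big_split /= -mulr_sumr sumrB sum_xs sum_w subrr mulr0 addr0.
have -> : - eps = \sum_i (- eps * xs i) by rewrite -mulr_sumr sum_xs mulr1.
apply: ler_sum => i _.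
have := xs_ge0 i; have := w_ge0 i.
by case: (split_c i) => -[? ?] ? ?; nra.
Qed.

End ThresholdSum.

Section PartitionThreshold.
Set Implicit Arguments.
Unset Strict Implicit.
Variables (R : realType) (T : finType) (n : nat) (eps : R).
Variables (xs w f : T -> R) (X1 X2 X3 : {set T}).
Hypothesis X_cover : X1 :|: X2 :|: X3 = [set: T].
Hypothesis w_X1 : forall i, i \in X1 -> w i = 0.
Hypothesis w_X3 : forall i, i \in X3 -> w i = n%:R^-1.
Hypothesis xs_ge0 : forall i, 0 <= xs i.
Hypothesis xs_le : forall i, xs i <= n%:R^-1.

Lemma in_partition i : [\/ i \in X1, i \in X2 | i \in X3].
Proof.
have : i \in [set: T] by rewrite inE.
by rewrite -X_cover !inE => /orP[/orP[]|] ?; [constructor 1|constructor 2|constructor 3].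
Qed.

Lemma threshold_split_no_interior :
  X2 = finset.set0 -> \sum_i w i = 1 ->
  (\big[maxe/-oo%E]_(i in X3) (f i)%:E <=
     \big[mine/+oo%E]_(i in X1) (f i)%:E + eps%:E)%E ->
  exists c, threshold_split xs w f c eps.
Proof.
move=> X2_0 sum_w max_le_min.
have notX2 i : i \in X2 = false by rewrite X2_0 inE.
have [X3_0|/set0Pn[j jX3]] := eqVneq X3 finset.set0.
  have w0 : \sum_i w i = 0.
    apply: big1 => i _; have [||] := in_partition i; first exact: w_X1.
      by rewrite notX2.
    by rewrite X3_0 inE.
  by move: (oner_neq0 R); rewrite -sum_w w0 eqxx.
have [i0 _ max_eq] :=
  @eq_bigmax _ _ _ -oo%E j (mem X3) (fun i => (f i)%:E) jX3 (fun _ _ => leNye _).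
exists (f i0) => i; have [iX1|iX2|iX3] := in_partition i.
- right; rewrite w_X1 //; split; first exact: xs_ge0.
  have := le_trans max_le_min (leeD2r eps%:E (bigmin_le_cond _ _ iX1)).
  by rewrite max_eq -EFinD lee_fin => ?; lra.
- by rewrite notX2 in iX2.
- left; rewrite w_X3 //; split; first exact: xs_le.
  by rewrite -lee_fin -max_eq; exact: (le_bigmax_cond _ _ iX3).
Qed.

Lemma threshold_split_interior (s : R) :
  (forall i, i \in X2 -> s - eps / 2 < f i < s + eps / 2) ->
  (\big[maxe/-oo%E]_(i in X3) (f i)%:E <= (s + eps / 2)%:E)%E ->
  ((s - eps / 2)%:E <= \big[mine/+oo%E]_(i in X1) (f i)%:E)%E ->
  threshold_split xs w f (s + eps / 2) eps.
Proof.
move=> f_X2 max_le min_ge i; have [iX1|iX2|iX3] := in_partition i.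
- right; rewrite w_X1 //; split; first exact: xs_ge0.
  have := le_trans min_ge (bigmin_le_cond _ _ iX1).
  by rewrite lee_fin => ?; lra.
- have /andP[f_gt f_lt] := f_X2 i iX2.
  have [?|?] := lerP (xs i) (w i); [left|right]; split=> //; lra.
- left; rewrite w_X3 //; split; first exact: xs_le.
  by rewrite -lee_fin; apply: le_trans max_le; exact: (le_bigmax_cond _ _ iX3).
Qed.

End PartitionThreshold.

Section DirectionalDerivative.
Set Implicit Arguments.
Unset Strict Implicit.
Variables (R : realType) (N : nat).
Variables (Phi : ('I_N -> R) -> \bar R) (F : ('I_N -> R) -> ('I_N -> R) -> R).
Hypothesis Phi_gtNy : forall v, (-oo < Phi v)%E.
Hypothesis F_deriv : is_dir_deriv Phi F.

Lemma dir_deriv_self w : design w -> Phi w \is a fin_num -> F w w = 0.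
Proof.
move=> dw fw; have w_ltey : (Phi w < +oo)%E by rewrite ltey_eq fw.
have quot0 : (fun a : R => ((Phi (seg w w a) - Phi w) * a^-1%:E)%E) = fun=> 0%E.
  apply/funext => a; have -> : seg w w a = w by apply/funext => j; rewrite /seg; ring.
  by rewrite subee // mul0e.
have := F_deriv dw dw w_ltey; rewrite /= quot0 => quot_cvg.
apply/eqP; rewrite eq_le -!lee_fin; apply/andP; split.
  by apply: (cvge_to_le quot_cvg); near=> a.
by apply: (cvge_to_ge quot_cvg); near=> a.
Unshelve. all: by end_near.
Qed.

Lemma dir_deriv_le_sub w eta : convex_in_weights Phi ->
  design w -> design eta -> Phi w \is a fin_num -> Phi eta \is a fin_num ->
  F w eta <= fine (Phi eta) - fine (Phi w).
Proof.
move=> Phi_convex dw deta fw feta.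
have w_ltey : (Phi w < +oo)%E by rewrite ltey_eq fw.
rewrite -lee_fin; apply: (cvge_to_le (F_deriv dw deta w_ltey)).
near=> a.
have a_gt0 : 0 < a by near: a; exact: nbhs_right_gt.
have a_lt1 : a < 1 by near: a; apply: nbhs_right_lt; exact: ltr01.
have a_01 : 0 <= a <= 1 by rewrite !ltW.
have := Phi_convex _ _ a dw deta a_01.
rewrite -(fineK fw) -(fineK feta) -!EFinM -EFinD /=.
move: (Phi_gtNy (seg w eta a)); case: (Phi _) => [r||] //= _.
rewrite -EFinD -EFinM !lee_fin ler_pdivrMr // => ?; nra.
Unshelve. all: by end_near.
Qed.

Lemma lin_dir_deriv_sub w eta : lin_diff Phi F ->
  design w -> design eta -> Phi w \is a fin_num ->
  F w eta = \sum_i (eta i - w i) * F w (delta i).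
Proof.
move=> F_lin dw deta fw; have w_ltey : (Phi w < +oo)%E by rewrite ltey_eq fw.
rewrite F_lin // -[LHS]subr0 -[X in _ - X](dir_deriv_self dw fw) (F_lin w w) //.
by rewrite -sumrB; apply: eq_bigr => i _; rewrite mulrBl.
Qed.

End DirectionalDerivative.

Lemma Xi_design_design (R : realType) (N n : nat) (v : 'I_N -> R) :
  Xi_design n v -> design v.
Proof. by move=> [v_bd sum_v]; split=> // i; have /andP[] := v_bd i. Qed.

Theorem theorem4 (R : realType) (N n p : nat) (hnN : (n <= N)%N)
  (I : 'I_N -> 'M[R]_p) (hI : forall i, symPSD (I i))
  (phi : 'M[R]_p -> \bar R)
  (F : ('I_N -> R) -> ('I_N -> R) -> R)
  (hLam : in_Lambda (fun w => phi (info_mx I w)) F)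
  (xi_star : 'I_N -> R) (hstar : Xi_design n xi_star)
  (hopt : forall xi, Xi_design n xi ->
     (phi (info_mx I xi_star) <= phi (info_mx I xi))%E)
  (eps : R) (heps : 0 < eps)
  (w : 'I_N -> R) (hw : Xi_design n w)
  (hfin : (phi (info_mx I w) < +oo)%E)
  (X1 X2 X3 : {set 'I_N})
  (hpart : [/\ X1 :|: X2 :|: X3 = [set: 'I_N], X1 :&: X2 = finset.set0,
              X1 :&: X3 = finset.set0 & X2 :&: X3 = finset.set0])
  (ha : (forall i, i \in X1 -> w i = 0) /\
        (forall i, i \in X3 -> w i = n%:R^-1))
  (hb : X2 = finset.set0 ->
     (\big[maxe/-oo%E]_(i in X3) (F w (delta i))%:E <=
      \big[mine/+oo%E]_(i in X1) (F w (delta i))%:E + eps%:E)%E)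
  (hc : X2 != finset.set0 ->
     exists s : R, forall i, i \in X2 ->
       [/\ 0 < w i < n%:R^-1,
           s - eps / 2 < F w (delta i) < s + eps / 2,
           (\big[maxe/-oo%E]_(j in X3) (F w (delta j))%:E <= (s + eps / 2)%:E)%E
         & ((s - eps / 2)%:E <= \big[mine/+oo%E]_(j in X1) (F w (delta j))%:E)%E]) :
  (phi (info_mx I w) - phi (info_mx I xi_star) <= eps%:E)%E.
Proof.
have [Phi_gtNy [Phi_convex [F_deriv [F_lin _]]]] := hLam.
have [X_cover _ _ _] := hpart; have [w_X1 w_X3] := ha.
have [dw ds] := (Xi_design_design hw, Xi_design_design hstar).
have [xs_ge0 xs_le] : (forall i, 0 <= xi_star i) /\ (forall i, xi_star i <= n%:R^-1).
  by case: hstar => xs_bd _; split=> i; have /andP[] := xs_bd i.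
have fw : phi (info_mx I w) \is a fin_num by rewrite fin_real ?Phi_gtNy.
have fs : phi (info_mx I xi_star) \is a fin_num.
  by rewrite fin_real ?Phi_gtNy ?(le_lt_trans (hopt w hw)).
have [c split_c] : exists c,
    threshold_split xi_star w (fun i => F w (delta i)) c eps.
  have [X2_0|/[dup]/hc[s hs] /set0Pn[j jX2]] := eqVneq X2 finset.set0.
    exact: (threshold_split_no_interior X_cover w_X1 w_X3 xs_ge0 xs_le
              X2_0 dw.2 (hb X2_0)).
  have [_ _ max_le min_ge] := hs j jX2.
  exists (s + eps / 2).
  apply: (threshold_split_interior X_cover w_X1 w_X3 xs_ge0 xs_le _ max_le min_ge).
  by move=> i /hs[].
have sum_ge := threshold_split_sum_ge (ltW heps) xs_ge0 dw.1 ds.2 dw.2 split_c.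
have F_le := dir_deriv_le_sub Phi_gtNy F_deriv Phi_convex dw ds fw fs.
rewrite (lin_dir_deriv_sub F_deriv F_lin dw ds fw) in F_le.
rewrite -(fineK fw) -(fineK fs) -EFinD lee_fin.
set S := \sum_i _ in sum_ge F_le; lra.
Qed.
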